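(* For every nonempty $V_1\subseteq V$, $$\min_{\mathcal{S}:\ s\in\mathcal{S},\ t\notin\mathcal{S},\ \mathcal{S}\cap V=V_1} c(\mathcal{S},V_\mathcal{H}\setminus\mathcal{S})\;=\;|V_\psi|\Big[\mu_\psi(G)+\big(\rho_\psi^*-\rho_\psi(V_1)\big)|V_1|\Big].$$ Moreover, the minimum is attained by a set $\mathcal{S}$ whose intersection with $\Lambda'$ is the set of all groups in $\Lambda'$ whose common node set is contained in $V_1$.
   Context: Let $G=(V,E)$ be a finite simple undirected graph and $\psi=(V_\psi,E_\psi)$ a pattern graph (a finite graph). A $\psi$-instance in $G$ is a subgraph of $G$ (node set and edge set) isomorphic to $\psi$. For $W\subseteq V$, $\mu_\psi(G[W])$ is the number of $\psi$-instances all of whose nodes lie in $W$, $\mu_\psi(G)=\mu_\psi(G[V])$, and for nonempty $W$, $\rho_\psi(W)=\mu_\psi(G[W])/|W|$; $\rho_\psi^*=\max_{\emptyset\ne W\subseteq V}\rho_\psi(W)$. $deg_G(v,\psi)$ is the number of $\psi$-instances containing $v$. $\Lambda'$ is the partition of the set of all $\psi$-instances of $G$ into groups $g$ of instances having the same node set, denoted $\lambda_g$. The flow network $\mathcal{H}=(V_\mathcal{H},E_\mathcal{H},c)$ has $V_\mathcal{H}=V\cup\{\lambda_g:g\in\Lambda'\}\cup\{s,t\}$ (one new node per group) and arcs: for each $v\in V$, $(s,v)$ of capacity $deg_G(v,\psi)$, $(v,t)$ of capacity $|V_\psi|\rho_\psi^*$, $(v,s),(t,v)$ of capacity $0$; for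 each group $g$ and each $v\in\lambda_g$, $(\lambda_g,v)$ of capacity $|g|(|V_\psi|-1)$ and $(v,\lambda_g)$ of capacity $|g|$; no other arcs. For $s\in\mathcal{S}$, $t\notin\mathcal{S}$, $c(\mathcal{S},V_\mathcal{H}\setminus\mathcal{S})$ is the total capacity of arcs from $\mathcal{S}$ to its complement. *)

From HB Require Import structures.
From mathcomp Require Import all_boot all_order all_algebra.
Set Implicit Arguments. Unset Strict Implicit. Unset Printing Implicit Defensive.
Import Order.TTheory GRing.Theory Num.Theory.
Local Open Scope ring_scope.

Section Defs.
Variables (T P : finType) (e : rel T) (ep : rel P).

(* A candidate subgraph: node set and edge set (edges = 2-element node sets). *)
Definition subgraph_t := ({set T} * {set {set T}})%type.

Definition is_instance (I : subgraph_t) : bool :=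
  [exists f : {ffun P -> T},
    [&& injectiveb f,
        I.1 == f @: [set: P],
        I.2 == [set [set f x.1; f x.2] | x in [set x : P * P | ep x.1 x.2]]
      & [forall p : P, forall q : P, ep p q ==> e (f p) (f q)]]].

Definition instances : {set subgraph_t} := [set I | is_instance I].

Definition mu (W : {set T}) : nat := #|[set I in instances | I.1 \subset W]|.
Definition muG : nat := mu [set: T].
Definition rho (W : {set T}) : rat := (mu W)%:R / (#|W|)%:R.
(* rho_psi^* ; all rho W are >= 0, so the max with default 0 is the max over
   nonempty W whenever T is nonempty *)
Definition rho_star : rat := \big[Num.max/0]_(W : {set T} | W != set0) rho W.
Definition deg (v : T) : nat := #|[set I in instances | v \in I.1]|.

(* Lambda': groups, identified with their common node sets lambda_g *)
Definition groups : {set {set T}} := [set I.1 | I in instances].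
Definition gsize (W : {set T}) : nat := #|[set I in instances | I.1 == W]|.

Definition kpsi : rat := (#|P|)%:R.

Definition hnode := ((T + {set T}) + bool)%type.
Definition VN (v : T) : hnode := inl (inl v).
Definition GN (W : {set T}) : hnode := inl (inr W).
Definition Src : hnode := inr true.
Definition Snk : hnode := inr false.

Definition VH : {set hnode} :=
  [set x : hnode | match x with inl (inr W) => W \in groups | _ => true end].

Definition cap (x y : hnode) : rat :=
  match x, y with
  | inr true, inl (inl v) => (deg v)%:R
  | inl (inl v), inr false => kpsi * rho_star
  | inl (inr W), inl (inl v) =>
      if (W \in groups) && (v \in W) then (gsize W)%:R * (kpsi - 1) else 0
  | inl (inl v), inl (inr W) =>
      if (W \in groups) && (v \in W) then (gsize W)%:R else 0
  | _, _ => 0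
  end.

Definition cutcap (S : {set hnode}) : rat :=
  \sum_(x in S) \sum_(y in VH :\: S) cap x y.

Definition admissible (V1 : {set T}) (S : {set hnode}) : bool :=
  [&& S \subset VH, Src \in S, Snk \notin S & [set v | VN v \in S] == V1].

End Defs.

From HB Require Import structures.
From mathcomp Require Import all_boot all_order all_algebra lra ring.
Set Implicit Arguments. Unset Strict Implicit. Unset Printing Implicit Defensive.
Import Order.TTheory GRing.Theory Num.Theory.
Local Open Scope ring_scope.

(* In an admissible cut the source pays deg v for each v outside V1, each v in
   V1 pays k rho* towards t, and a group node W pays |g| (k - 1) |W \ V1| on the
   source side or |g| |W n V1| on the sink side.  Since |W n V1| + |W \ V1| = k,
   the sink side is never worse unless W is inside V1, where the source side is
   free; so the minimum puts exactly the groups inside V1 on the source side.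
   Counting instances by node set, the degrees outside V1 plus these optimal
   group costs add up to k times the number of instances not inside V1, that is
   k (mu(G) - mu(V1)).  Neither the maximality of rho* nor the simplicity of the
   graphs plays any role. *)

Lemma big_hnode (T : finType) (p : pred (hnode T)) (F : hnode T -> rat) :
  \sum_(x | p x) F x = \sum_(v | p (VN v)) F (VN v)
    + \sum_(W | p (GN W)) F (GN W)
    + (if p (Src T) then F (Src T) else 0) + (if p (Snk T) then F (Snk T) else 0).
Proof. by rewrite !big_sumType /= [X in _ + X]big_mkcond big_bool addrA. Qed.

Lemma sum_if_mem (X : finType) (A B : {set X}) (c : rat) :
  \sum_(x in A) (if x \in B then c else 0) = c * (#|A :&: B|)%:R.
Proof.
rewrite -big_mkcondr (eq_bigl (mem (A :&: B))) => [|x]; last by rewrite !inE.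
by rewrite sumr_const mulr_natr.
Qed.

Section Counting.
Variables (T P : finType) (e : rel T) (ep : rel P).

Local Notation instances := (instances e ep).
Local Notation groups := (groups e ep).
Local Notation gsize := (gsize e ep).
Local Notation deg := (deg e ep).

Lemma card_instance I : I \in instances -> #|I.1| = #|P|.
Proof.
rewrite inE => /existsP [f /and4P [/injectiveP f_inj /eqP -> _ _]].
by rewrite card_imset // cardsT.
Qed.

Lemma card_group (W : {set T}) : W \in groups -> #|W| = #|P|.
Proof. by case/imsetP => I I_inst ->; exact: card_instance I_inst. Qed.

Lemma sum_deg (A : {set T}) :
  (\sum_(v in A) deg v = \sum_(I in instances) #|I.1 :&: A|)%N.
Proof.
under eq_bigr do rewrite /deg -sum1_card.
rewrite (exchange_big_dep (mem instances)) /=; last first.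
  by move=> v I _; rewrite inE => /andP[].
apply: eq_bigr => I I_inst; rewrite -sum1_card; apply: eq_bigl => v.
by rewrite [I \in _]inE I_inst inE andbC.
Qed.

Lemma sum_gsize (F : {set T} -> nat) :
  (\sum_(W in groups) gsize W * F W = \sum_(I in instances) F I.1)%N.
Proof.
rewrite (partition_big fst (mem groups)) => [|I I_inst]; last exact: imset_f.
apply: eq_bigr => W _; rewrite /gsize -sum1_card big_distrl /=.
by apply: eq_big => [I|I]; rewrite inE // => /andP[_ /eqP ->]; rewrite mul1n.
Qed.

Variable V1 : {set T}.

Definition notsub_instances := [set I in instances | ~~ (I.1 \subset V1)].

Lemma muG_split : (muG e ep = mu e ep V1 + #|notsub_instances|)%N.
Proof.
rewrite /muG /mu.
have -> : [set I in instances | I.1 \subset [set: T]] = instances.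
  by apply/setP => I; rewrite inE subsetT andbT.
rewrite -(cardsID [set I : subgraph_t T | I.1 \subset V1] instances).
by congr (_ + _)%N; apply: eq_card => I; rewrite !inE // andbC.
Qed.

Lemma count_outside_V1 :
  (\sum_(v in ~: V1) deg v
   + \sum_(W in groups) gsize W * (if W \subset V1 then 0 else #|W :&: V1|)
   = #|P| * #|notsub_instances|)%N.
Proof.
rewrite sum_deg sum_gsize -big_split /= mulnC -sum_nat_const.
rewrite (bigID [pred I : subgraph_t T | I.1 \subset V1]) /=.
rewrite big1 => [|I /andP[_ I_sub]]; last first.
  by rewrite I_sub -setDE addn0; apply/eqP; rewrite cards_eq0 setD_eq0.
rewrite add0n; apply: eq_big => [I|I /andP[I_inst I_notsub]]; first by rewrite !inE.
by rewrite (negbTE I_notsub) -setDE addnC cardsID card_instance.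
Qed.

End Counting.

Section Cut.
Variables (T P : finType) (e : rel T) (ep : rel P) (V1 : {set T}).

Local Notation groups := (groups e ep).
Local Notation gsize := (gsize e ep).
Local Notation deg := (deg e ep).
Local Notation cap := (cap e ep).
Local Notation VH := (VH e ep).
Local Notation k := (kpsi P).

Definition group_cost (source_side : bool) (W : {set T}) : rat :=
  if source_side then (gsize W)%:R * (k - 1) * (#|W :\: V1|)%:R
  else (gsize W)%:R * (#|W :&: V1|)%:R.

Lemma cardsI_le_scaled_cardsD (W : {set T}) : W \in groups -> ~~ (W \subset V1) ->
  (#|W :&: V1|)%:R <= (k - 1) * (#|W :\: V1|)%:R.
Proof.
move=> Wg W_notsub; rewrite /kpsi -(card_group Wg) -(cardsID V1 W) natrD.
have : (1 <= #|W :\: V1|)%N by rewrite card_gt0 setD_eq0.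
rewrite -(ler_nat rat); move: (#|W :&: V1|%:R) (ler0n rat #|W :&: V1|).
by move=> a a_ge0 b_ge1; nra.
Qed.

Lemma group_cost_min (W : {set T}) (b : bool) : W \in groups ->
  group_cost (W \subset V1) W <= group_cost b W.
Proof.
move=> Wg; rewrite /group_cost; case: (boolP (W \subset V1)) => [W_sub|W_notsub].
  have /eqP -> : #|W :\: V1| == 0%N by rewrite cards_eq0 setD_eq0.
  by case: b; rewrite ?mulr0 // mulr_ge0.
case: b => //; rewrite -mulrA ler_wpM2l //.
exact: cardsI_le_scaled_cardsD.
Qed.

Lemma group_cost_optimal (W : {set T}) :
  group_cost (W \subset V1) W
  = (gsize W * (if W \subset V1 then 0 else #|W :&: V1|))%:R.
Proof.
rewrite /group_cost natrM; case: (boolP (W \subset V1)) => // W_sub.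
have /eqP -> : #|W :\: V1| == 0%N by rewrite cards_eq0 setD_eq0.
by rewrite !mulr0.
Qed.

Variable S : {set hnode T}.
Hypothesis S_adm : admissible e ep V1 S.

Definition outcap (x : hnode T) : rat := \sum_(y in VH :\: S) cap x y.

Lemma VN_in_cut v : (VN v \in S) = (v \in V1).
Proof. by case/and4P: S_adm => _ _ _ /eqP <-; rewrite inE. Qed.

Lemma GN_in_cut W : GN W \in S -> W \in groups.
Proof. by case/and4P: S_adm => /subsetP S_VH _ _ _ /S_VH; rewrite inE. Qed.

Lemma outcapE x : outcap x = \sum_(v in ~: V1) cap x (VN v)
  + \sum_(W in groups | GN W \notin S) cap x (GN W) + cap x (Snk T).
Proof.
case/and4P: S_adm => _ Src_S Snk_S _.
rewrite /outcap big_hnode !inE Src_S (negbTE Snk_S) /= addr0.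
by congr (_ + _ + _); apply: eq_bigl => y; rewrite !inE ?VN_in_cut // andbC.
Qed.

Lemma outcap_Src : outcap (Src T) = (\sum_(v in ~: V1) deg v)%:R.
Proof. by rewrite outcapE [X in _ + X + _]big1 // !addr0 natr_sum. Qed.

Lemma outcap_VN v : outcap (VN v) = k * rho_star e ep
  + \sum_(W in groups | GN W \notin S) (if v \in W then (gsize W)%:R else 0).
Proof.
rewrite outcapE big1 // add0r addrC; congr (_ + _).
by apply: eq_bigr => W /andP[Wg _]; rewrite /= Wg.
Qed.

Lemma outcap_GN W : W \in groups ->
  outcap (GN W) = group_cost true W.
Proof.
move=> Wg; rewrite outcapE [X in _ + X + _]big1 // !addr0.
under eq_bigr do rewrite /= Wg /=.
by rewrite sum_if_mem setIC -setDE.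
Qed.

Lemma sum_outcap_VN : \sum_(v in V1) outcap (VN v)
  = (#|V1|)%:R * (k * rho_star e ep)
    + \sum_(W in groups | GN W \notin S) group_cost false W.
Proof.
under eq_bigr do rewrite outcap_VN.
rewrite big_split /= sumr_const exchange_big /= mulr_natl; congr (_ + _).
by apply: eq_bigr => W _; rewrite sum_if_mem setIC mulrC.
Qed.

Lemma sum_outcap_GN : \sum_(W | GN W \in S) outcap (GN W)
  = \sum_(W in groups | GN W \in S) group_cost true W.
Proof.
rewrite big_mkcondl; apply: eq_bigr => W W_S.
by rewrite (GN_in_cut W_S) outcap_GN // GN_in_cut.
Qed.

Lemma cutcapE : cutcap e ep S = (#|V1|)%:R * (k * rho_star e ep)
  + (\sum_(v in ~: V1) deg v)%:R + \sum_(W in groups) group_cost (GN W \in S) W.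
Proof.
case/and4P: S_adm => _ Src_S Snk_S _.
rewrite /cutcap (eq_bigr outcap) // big_hnode Src_S (negbTE Snk_S) addr0.
rewrite (eq_bigl (mem V1) (fun v => outcap (VN v))) => [|v]; last first.
  by rewrite VN_in_cut.
have -> : \sum_(W in groups) group_cost (GN W \in S) W
    = \sum_(W in groups | GN W \in S) group_cost true W
      + \sum_(W in groups | GN W \notin S) group_cost false W.
  rewrite (bigID (fun W => GN W \in S)); congr (_ + _).
    by apply: eq_bigr => W /andP[_ ->].
  by apply: eq_bigr => W /andP[_ /negbTE ->].
rewrite sum_outcap_VN sum_outcap_GN outcap_Src; lra.
Qed.

End Cut.

Section OptimalCut.
Variables (T P : finType) (e : rel T) (ep : rel P) (V1 : {set T}).

Local Notation groups := (groups e ep).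
Local Notation k := (kpsi P).

Definition source_side_cut : {set hnode T} :=
  [set x | match x with
           | inl (inl v) => v \in V1
           | inl (inr W) => (W \in groups) && (W \subset V1)
           | inr b => b
           end].

Lemma source_side_cut_admissible : admissible e ep V1 source_side_cut.
Proof.
apply/and4P; split; rewrite ?inE //.
  by apply/subsetP => [[[v|W]|b]]; rewrite !inE // => /andP[].
by apply/eqP/setP => v; rewrite !inE.
Qed.

Lemma optimal_cut_value : V1 != set0 ->
  k * ((muG e ep)%:R + (rho_star e ep - rho e ep V1) * (#|V1|)%:R)
  = (#|V1|)%:R * (k * rho_star e ep) + (\sum_(v in ~: V1) deg e ep v)%:R
    + \sum_(W in groups) group_cost e ep V1 (W \subset V1) W.
Proof.
move=> V1_neq0; rewrite /rho mulrBl divfK ?pnatr_eq0 ?cards_eq0 //.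
rewrite (eq_bigr _ (fun W _ => group_cost_optimal e ep V1 W)).
rewrite -natr_sum -addrA -natrD count_outside_V1 (muG_split _ _ V1) /kpsi.
rewrite natrM natrD; ring.
Qed.

End OptimalCut.

Theorem lemma10 (T P : finType) (e : rel T) (ep : rel P)
  (He_irr : irreflexive e) (He_sym : symmetric e)
  (Hp_irr : irreflexive ep) (Hp_sym : symmetric ep)
  (V1 : {set T}) (HV1 : V1 != set0) :
  let rhs := kpsi P * ((muG e ep)%:R
               + (rho_star e ep - rho e ep V1) * (#|V1|)%:R) in
  (forall S : {set hnode T}, admissible e ep V1 S -> rhs <= cutcap e ep S) /\
  (exists S : {set hnode T},
     [/\ admissible e ep V1 S, cutcap e ep S = rhs &
         [set W | GN W \in S] = [set W in groups e ep | W \subset V1]]).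
Proof.
move=> rhs; have rhsE : rhs = _ := optimal_cut_value e ep HV1.
split=> [S S_adm|].
  rewrite rhsE (cutcapE S_adm) lerD2l.
  by apply: ler_sum => W Wg; apply: group_cost_min.
have S0_adm := source_side_cut_admissible e ep V1.
exists (source_side_cut e ep V1); split=> //.
  rewrite rhsE (cutcapE S0_adm); congr (_ + _).
  by apply: eq_bigr => W Wg; rewrite inE /= Wg.
by apply/setP => W; rewrite !inE.
Qed.
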